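(* Assume the setting below. Let $h=\max\{1,\lceil 8\kappa_Q^{1/2}C_A t_{\mathrm{mix}}/a\rceil\}$ and $\mathbf Y_1=(\mathrm I-\alpha\mathbf A(Z_h))(\mathrm I-\alpha\mathbf A(Z_{h-1}))\cdots(\mathrm I-\alpha\mathbf A(Z_1))$. Then for any $\alpha\in(0,\alpha^{(\mathrm M)}_\infty t_{\mathrm{mix}}^{-1}]$ and any initial probability measure $\xi$ on $(\mathsf Z,\mathcal Z)$, $\mathbb P_\xi$-almost surely, $$\|\mathbf Y_1-\mathbb E_\xi[\mathbf Y_1]\|_Q\le C_\sigma\,\alpha h,\qquad C_\sigma=2\bigl(\kappa_Q^{1/2}C_A+a/6\bigr).$$
   Context: Markov setting: $(\mathsf Z,\mathsf d_{\mathsf Z})$ is a Polish space with Borel $\sigma$-field $\mathcal Z$; $\mathrm P$ is a Markov kernel on $\mathsf Z\times\mathcal Z$ with invariant probability distribution $\pi$; for a probability measure $\xi$ on $\mathsf Z$, $(Z_k)_{k\ge0}$ denotes the Markov chain with kernel $\mathrm P$ and $Z_0\sim\xi$, with law $\mathbb P_\xi$ and expectation $\mathbb E_\xi$. For $k\ge1$, $\Delta(\mathrm P^k)=\sup_{z,z'\in\mathsf Z}\frac12\|\mathrm P^k(z,\cdot)-\mathrm P^k(z',\cdot)\|_{\mathrm{TV}}$ (total variation norm). Assume there is $t_{\mathrm{mix}}\in\mathbb N^*$ with $\Delta(\mathrm P^k)\le(1/4)^{\lfloor k/t_{\mathrm{mix}}\rfloor}$ for all $k\in\mathbb N^*$.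 LSA data: $d\ge1$; $\mathbf A:\mathsf Z\to\mathbb R^{d\times d}$ measurable with $\bar{\mathbf A}=\int\mathbf A\,d\pi$; $\|\cdot\|$ is the Euclidean/spectral norm; $-\bar{\mathbf A}$ is Hurwitz (all eigenvalues of $\bar{\mathbf A}$ have positive real part); $C_A:=\sup_z\|\mathbf A(z)\|\vee\sup_z\|\mathbf A(z)-\bar{\mathbf A}\|<\infty$. $Q$ is the unique symmetric positive definite solution of $\bar{\mathbf A}^\top Q+Q\bar{\mathbf A}=\mathrm I$; $\|x\|_Q=(x^\top Qx)^{1/2}$, $\|B\|_Q=\max_{\|x\|_Q=1}\|Bx\|_Q$; $\kappa_Q=\lambda_{\max}(Q)/\lambda_{\min}(Q)$; $a=1/(2\|Q\|)$; $\alpha_\infty=\min\{1/(2\|\bar{\mathbf A}\|_Q^2\|Q\|),\|Q\|\}$; and $$\alpha^{(\mathrm M)}_\infty=\min\Bigl\{\alpha_\infty,\ \kappa_Q^{-1/2}C_A^{-1},\ \frac{a}{6e\kappa_QC_A^2}\Bigr\}\Big/\bigl\lceil 8\kappa_Q^{1/2}C_A/a\bigr\rceil .$$ *)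

From HB Require Import structures.
From mathcomp Require Import all_boot all_order all_algebra.
From mathcomp Require Import all_classical all_reals all_analysis.
From mathcomp.real_closed Require Import complex.
Set Implicit Arguments.
Unset Strict Implicit.
Unset Printing Implicit Defensive.
Import Order.TTheory GRing.Theory Num.Theory.
Local Open Scope classical_set_scope.
Local Open Scope ring_scope.

Section Polish.
Context {R : realType} {dT : measure_display} {T : measurableType dT}.
Variable dist : T -> T -> R.

Definition is_metric : Prop :=
  [/\ forall x y, 0 <= dist x y,
      forall x y, dist x y = 0 <-> x = y,
      forall x y, dist x y = dist y x &
      forall x y z, dist x z <= dist x y + dist y z].

Definition dist_open (U : set T) : Prop :=
  forall x, U x -> exists2 r : R, 0 < r & [set y | dist x y < r] `<=` U.

Definition dist_cauchy (u : nat -> T) : Prop :=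
  forall e : R, 0 < e -> exists N : nat,
    forall m k, (N <= m)%N -> (N <= k)%N -> dist (u m) (u k) < e.

Definition dist_converges (u : nat -> T) : Prop :=
  exists l : T, forall e : R, 0 < e -> exists N : nat,
    forall m, (N <= m)%N -> dist (u m) l < e.

Definition dist_complete : Prop :=
  forall u : nat -> T, dist_cauchy u -> dist_converges u.

Definition dist_separable : Prop :=
  exists D : set T, countable D /\
    forall x (e : R), 0 < e -> exists2 y, D y & dist x y < e.

Definition dist_borel : Prop :=
  @measurable _ T = <<s dist_open >>.

Definition polish_borel : Prop :=
  [/\ is_metric, dist_complete, dist_separable & dist_borel].
End Polish.

Section Kernels.
Context {R : realType} {dT : measure_display} {T : measurableType dT}.
Variable P : R.-pker T ~> T.

Fixpoint kpow (k : nat) (z : T) (A : set T) : \bar R :=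
  match k with
  | 0 => (\1_A z)%:E
  | k'.+1 => (\int[P z]_y kpow k' y A)%E
  end.

Definition kinvariant (pi : probability T R) : Prop :=
  forall A, measurable A -> pi A = (\int[pi]_z P z A)%E.

Definition mpartition (s : seq (set T)) : Prop :=
  [/\ forall A, A \in s -> measurable A,
      forall i j, (i < size s)%N -> (j < size s)%N -> i <> j ->
        nth set0 s i `&` nth set0 s j = set0 &
      \big[setU/set0]_(A <- s) A = setT].

Definition tv_norm (mu nu : set T -> \bar R) : R :=
  sup [set x : R | exists2 s, mpartition s &
        x = \sum_(A <- s) `| fine (mu A) - fine (nu A) |].

Definition dobrushin (k : nat) : R :=
  sup [set x : R | exists z z' : T,
        x = 2^-1 * tv_norm (kpow k z) (kpow k z')].
End Kernels.

Section Chain.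
Context {R : realType} {dT : measure_display} {T : measurableType dT}.
Variable P : R.-pker T ~> T.

(* E[ prod_{i=m+1}^{m+n} 1_{A_i}(Z_i) | Z_m = z ] *)
Fixpoint fdd_from (A : nat -> set T) (m n : nat) (z : T) : \bar R :=
  match n with
  | 0 => 1%E
  | n'.+1 => (\int[P z]_y ((\1_(A m.+1) y)%:E * fdd_from A m.+1 n' y))%E
  end.

(* (Zs k)_k is a Markov chain with kernel P and Z_0 ~ xi on (Omega, Pr):
   all its finite-dimensional distributions are the ones of P_xi *)
Definition is_markov_chain {dO : measure_display} {Omega : measurableType dO}
  (Pr : probability Omega R) (Zs : nat -> Omega -> T) (xi : probability T R)
  : Prop :=
  (forall k, measurable_fun setT (Zs k)) /\
  forall (A : nat -> set T) (n : nat), (forall i, measurable (A i)) ->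
    Pr [set w | forall i, (i <= n)%N -> A i (Zs i w)] =
    (\int[xi]_z ((\1_(A 0%N) z)%:E * fdd_from A 0 n z))%E.
End Chain.

Section Mx.
Context {R : realType}.

Definition mx_expect {dT : measure_display} {T : measurableType dT}
  {m n : nat} (mu : {measure set T -> \bar R}) (F : T -> 'M[R]_(m, n))
  : 'M[R]_(m, n) :=
  \matrix_(i, j) fine (\int[mu]_x (F x i j)%:E)%E.

Definition vnorm {n : nat} (x : 'cV[R]_n) : R :=
  Num.sqrt (\sum_i x i 0 ^+ 2).

Definition mnorm {n : nat} (B : 'M[R]_n) : R :=
  sup [set vnorm (B *m x) | x in [set x : 'cV[R]_n | vnorm x = 1]].

Definition qvnorm {n : nat} (Q : 'M[R]_n) (x : 'cV[R]_n) : R :=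
  Num.sqrt ((x^T *m Q *m x) 0 0).

Definition qmnorm {n : nat} (Q B : 'M[R]_n) : R :=
  sup [set qvnorm Q (B *m x) | x in [set x : 'cV[R]_n | qvnorm Q x = 1]].

Definition lambda_max {n : nat} (Q : 'M[R]_n) : R :=
  sup [set a : R | eigenvalue Q a].
Definition lambda_min {n : nat} (Q : 'M[R]_n) : R :=
  inf [set a : R | eigenvalue Q a].

Definition sym_posdef {n : nat} (Q : 'M[R]_n) : Prop :=
  Q^T = Q /\ forall x : 'cV[R]_n, x != 0 -> 0 < (x^T *m Q *m x) 0 0.

(* -B is Hurwitz: every complex eigenvalue of B has positive real part *)
Definition neg_hurwitz {n : nat} (B : 'M[R]_n) : Prop :=
  forall l : R[i], eigenvalue (map_mx (fun x => Complex x 0) B) l ->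
    0 < complex.Re l.
End Mx.

Section Consts.
Context {R : realType} {dT : measure_display} {T : measurableType dT}.
Context {n : nat}.
Variables (pi : probability T R) (A : T -> 'M[R]_n.+1) (Q : 'M[R]_n.+1).

Definition Abar : 'M[R]_n.+1 := mx_expect pi A.

Definition CA_bounded : Prop :=
  has_ubound (range (fun z => mnorm (A z))) /\
  has_ubound (range (fun z => mnorm (A z - Abar))).

Definition C_A : R :=
  Num.max (sup (range (fun z => mnorm (A z))))
          (sup (range (fun z => mnorm (A z - Abar)))).

Definition kappa_Q : R := lambda_max Q / lambda_min Q.
Definition a_Q : R := 1 / (2 * mnorm Q).
Definition alpha_inf : R :=
  Num.min (1 / (2 * qmnorm Q Abar ^+ 2 * mnorm Q)) (mnorm Q).
Definition alphaM_inf : R :=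
  Num.min (Num.min alpha_inf ((Num.sqrt kappa_Q)^-1 * C_A^-1))
          (a_Q / (6 * expR 1 * kappa_Q * C_A ^+ 2))
  / (Num.ceil (8 * Num.sqrt kappa_Q * C_A / a_Q))%:~R.

Definition block_len (tmix : nat) : nat :=
  maxn 1 `|Num.ceil (8 * Num.sqrt kappa_Q * C_A * tmix%:R / a_Q)|%N.

Definition C_sigma : R := 2 * (Num.sqrt kappa_Q * C_A + a_Q / 6).
End Consts.

From HB Require Import structures.
From mathcomp Require Import all_boot all_order all_algebra.
From mathcomp Require Import all_classical all_reals all_analysis.
From mathcomp.real_closed Require Import complex.
From mathcomp Require Import ring lra zify.
Import Order.TTheory GRing.Theory Num.Theory.
Local Open Scope classical_set_scope.
Local Open Scope ring_scope.

(* With b = sqrt kappa_Q * C_A, comparing the Q-norm with the Euclidean one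
   through the extreme eigenvalues of Q (obtained variationally, as extreme
   Rayleigh quotients) shows that every A(z) has Q-operator norm at most b.
   Expanding the product then gives |Y_1 - I|_Q <= (1 + alpha b)^h - 1 on every
   sample path.  The Q-ball of that radius around I is convex and closed, so it
   also contains E[Y_1], whence |Y_1 - E Y_1|_Q <= 2((1 + alpha b)^h - 1).  The
   step-size condition gives alpha h b <= 1 and alpha h b^2 <= a/6, and
   (1 + x)^h - 1 <= hx + (hx)^2 for hx <= 1 turns this into C_sigma alpha h. *)

Section BilinearForm.
Context {R : realType} {n : nat}.
Implicit Types (S : 'M[R]_n) (u v w x : 'cV[R]_n).

Definition bil S u v : R := \sum_i \sum_j u i 0 * S i j * v j 0.

Local Notation sq x := (bil 1%:M x x).

Lemma bilE S u v : (u^T *m S *m v) 0 0 = bil S u v.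
Proof.
rewrite /bil mxE exchange_big; apply: eq_bigr => j _.
by rewrite !mxE mulr_suml; apply: eq_bigr => i _; rewrite !mxE.
Qed.

Lemma bil_mulmxr S u v : bil S u v = \sum_i u i 0 * (S *m v) i 0.
Proof.
apply: eq_bigr => i _; rewrite mxE mulr_sumr.
by apply: eq_bigr => j _; rewrite mulrA.
Qed.

Lemma bil1 u v : bil 1%:M u v = \sum_i u i 0 * v i 0.
Proof. by rewrite bil_mulmxr; apply: eq_bigr => i _; rewrite mul1mx. Qed.

Lemma bil_dot S u v : bil S u v = bil 1%:M u (S *m v).
Proof. by rewrite bil_mulmxr bil1. Qed.

Lemma bilDl S u v w : bil S (u + v) w = bil S u w + bil S v w.
Proof.
rewrite /bil -big_split; apply: eq_bigr => i _; rewrite -big_split.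
by apply: eq_bigr => j _; rewrite !mxE /=; ring.
Qed.

Lemma bilDr S u v w : bil S w (u + v) = bil S w u + bil S w v.
Proof.
rewrite /bil -big_split; apply: eq_bigr => i _; rewrite -big_split.
by apply: eq_bigr => j _; rewrite !mxE /=; ring.
Qed.

Lemma bilZl S c u v : bil S (c *: u) v = c * bil S u v.
Proof.
rewrite /bil mulr_sumr; apply: eq_bigr => i _; rewrite mulr_sumr.
by apply: eq_bigr => j _; rewrite !mxE /=; ring.
Qed.

Lemma bilZr S c u v : bil S u (c *: v) = c * bil S u v.
Proof.
rewrite /bil mulr_sumr; apply: eq_bigr => i _; rewrite mulr_sumr.
by apply: eq_bigr => j _; rewrite !mxE /=; ring.
Qed.

Lemma bilBl S u v w : bil S (u - v) w = bil S u w - bil S v w.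
Proof. by rewrite bilDl -scaleN1r bilZl mulN1r. Qed.

Lemma bil0l S v : bil S 0 v = 0.
Proof. by rewrite -(scale0r 0) bilZl mul0r. Qed.

Lemma bilZBm S1 S2 c1 c2 u v :
  bil (c1 *: S1 - c2 *: S2) u v = c1 * bil S1 u v - c2 * bil S2 u v.
Proof.
rewrite /bil !mulr_sumr -sumrB; apply: eq_bigr => i _; rewrite !mulr_sumr -sumrB.
by apply: eq_bigr => j _; rewrite !mxE /=; ring.
Qed.

Lemma bil_subscalar S c u v : bil (S - c%:M) u v = bil S u v - c * bil 1%:M u v.
Proof.
have -> : S - c%:M = 1 *: S - c *: 1%:M by rewrite scale1r scalemx1.
by rewrite bilZBm mul1r.
Qed.

Lemma bilNm S u v : bil (- S) u v = - bil S u v.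
Proof.
rewrite /bil -sumrN; apply: eq_bigr => i _; rewrite -sumrN.
by apply: eq_bigr => j _; rewrite !mxE; ring.
Qed.

Lemma bilC S u v : S^T = S -> bil S u v = bil S v u.
Proof.
move=> symS; rewrite /bil exchange_big; apply: eq_bigr => i _.
apply: eq_bigr => j _; have -> : S j i = S^T i j by rewrite mxE.
by rewrite symS; ring.
Qed.

Lemma bil_delta S i v : bil S (delta_mx i 0) v = (S *m v) i 0.
Proof.
rewrite bil_mulmxr (bigD1 i) //= big1 ?addr0; first by rewrite !mxE !eqxx mul1r.
by move=> j /negbTE nj; rewrite !mxE nj mul0r.
Qed.

Lemma sq_ge0 x : 0 <= sq x.
Proof. by rewrite bil1 sumr_ge0 // => i _; rewrite -expr2 sqr_ge0. Qed.

Lemma sq_gt0 x : x != 0 -> 0 < sq x.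
Proof.
move=> x0; rewrite lt_neqAle sq_ge0 andbT eq_sym; apply: contra x0 => /eqP.
rewrite bil1 => sq0; apply/eqP/matrixP => i j; rewrite (ord1 j) mxE.
have /eqP : x i 0 * x i 0 = 0.
  by apply: (psumr_eq0P _ sq0) => // k _; rewrite -expr2 sqr_ge0.
by rewrite mulf_eq0 orbb => /eqP.
Qed.

Lemma quadratic_ge0_discr (a b c : R) : 0 <= a -> 0 <= c ->
  (forall t, 0 <= a + 2 * t * b + t ^+ 2 * c) -> b ^+ 2 <= a * c.
Proof.
move=> a0 c0 H; have [c00|cn0] := eqVneq c 0.
  have [->|bn0] := eqVneq b 0; first by rewrite c00 expr0n mulr0.
  have := H (- (a + 1) / (2 * b)); rewrite c00 mulr0 addr0.
  have -> : 2 * (- (a + 1) / (2 * b)) * b = - (a + 1) by field; rewrite bn0.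
  lra.
have cp : 0 < c by rewrite lt_neqAle eq_sym cn0.
have := H (- b / c).
have -> : a + 2 * (- b / c) * b + (- b / c) ^+ 2 * c = (a * c - b ^+ 2) / c by field.
rewrite pmulr_lge0 ?invr_gt0 //; lra.
Qed.

Lemma bil_CauchySchwarz S u v : S^T = S -> (forall x, 0 <= bil S x x) ->
  bil S u v ^+ 2 <= bil S u u * bil S v v.
Proof.
move=> symS psdS; apply: quadratic_ge0_discr => // t.
have := psdS (u + t *: v).
rewrite !bilDl !bilDr !bilZl !bilZr (bilC _ v u) //.
suff -> : bil S u u + t * bil S u v + (t * bil S u v + t * (t * bil S v v)) =
  bil S u u + 2 * t * bil S u v + t ^+ 2 * bil S v v by [].
ring.
Qed.

Lemma dot_CauchySchwarz u v : bil 1%:M u v ^+ 2 <= sq u * sq v.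
Proof. by apply: bil_CauchySchwarz; [exact: trmx1 | exact: sq_ge0]. Qed.

Definition frob S : R := \sum_i \sum_j S i j ^+ 2.

Lemma frob_ge0 S : 0 <= frob S.
Proof. by rewrite !sumr_ge0 // => i _; rewrite sumr_ge0 // => j _; rewrite sqr_ge0. Qed.

Lemma sq_mulmx_le S x : sq (S *m x) <= frob S * sq x.
Proof.
rewrite bil1 /frob mulr_suml; apply: ler_sum => i _.
pose r : 'cV[R]_n := \col_j S i j.
have -> : (S *m x) i 0 = bil 1%:M r x.
  by rewrite bil1 mxE; apply: eq_bigr => j _; rewrite mxE.
have -> : \sum_j S i j ^+ 2 = sq r.
  by rewrite bil1; apply: eq_bigr => j _; rewrite mxE expr2.
by rewrite -expr2 dot_CauchySchwarz.
Qed.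

Lemma psd_singular S : S^T = S -> (forall x, 0 <= bil S x x) ->
  (forall e, 0 < e -> exists2 x, sq x = 1 & bil S x x < e) -> \det S = 0.
Proof.
(* were [S] invertible, [sq x <= frob (invmx S) * \tr S * bil S x x] would
   contradict [small] *)
move=> symS psdS small; apply/eqP/negPn/negP => detS0.
have unitS : S \in unitmx by rewrite unitmxE unitfE.
have Sii i : S i i = bil S (delta_mx i 0) (delta_mx i 0).
  by rewrite bil_delta -colE mxE.
pose t := \sum_i S i i.
have t_ge0 : 0 <= t by rewrite sumr_ge0 // => i _; rewrite Sii psdS.
have sqS x : sq (S *m x) <= t * bil S x x.
  rewrite bil1 /t mulr_suml; apply: ler_sum => i _.
  by rewrite -expr2 -bil_delta Sii bil_CauchySchwarz.
have sq_le x : sq x <= frob (invmx S) * t * bil S x x.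
  rewrite -{1 2}(mulKmx unitS x) -mulrA.
  by apply: le_trans (sq_mulmx_le _ _) _; rewrite ler_wpM2l ?frob_ge0.
pose K := frob (invmx S) * t.
have K_ge0 : 0 <= K by rewrite mulr_ge0 ?frob_ge0.
have [x x1 xe] := small (1 / (K + 1)) (divr_gt0 ltr01 (ltr_pwDr ltr01 K_ge0)).
have := sq_le x; rewrite x1 -/K => le1K.
move: xe; rewrite ltr_pdivlMr; last by lra.
have := psdS x; nra.
Qed.

Lemma eigenvalue_det0 S c : \det (S - c%:M) = 0 -> eigenvalue S c.
Proof.
move=> /eqP /det0P [v v0 Sv]; apply/eigenvalueP; exists v => //.
by apply/eqP; rewrite -subr_eq0 -mul_mx_scalar -mulmxBr Sv.
Qed.

Lemma eigenvalueN S c : eigenvalue (- S) (- c) = eigenvalue S c.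
Proof.
apply/eigenvalueP/eigenvalueP => -[v Sv v0]; exists v => //.
  by apply: oppr_inj; rewrite -mulmxN Sv scaleNr.
by rewrite mulmxN Sv scaleNr.
Qed.

Lemma eigenvalue_rayleigh S mu : S^T = S -> eigenvalue S mu ->
  exists2 x, x != 0 & bil S x x = mu * sq x.
Proof.
move=> symS /eigenvalueP [v Sv v0]; exists v^T.
  by rewrite trmx_eq0.
by rewrite bil_dot -{1}symS -trmx_mul Sv linearZ bilZr.
Qed.

Lemma bil_unit_rescale x : x != 0 ->
  exists2 y, sq y = 1 & forall S, bil S x x = sq x * bil S y y.
Proof.
move=> x0; have sqx_gt0 := sq_gt0 _ x0.
pose c : R := (Num.sqrt (sq x))^-1.
have c2 : c * c * sq x = 1.
  by rewrite -expr2 exprVn sqr_sqrtr ?mulVf ?gt_eqF // ltW.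
exists (c *: x); first by rewrite bilZl bilZr mulrA.
move=> S; rewrite bilZl bilZr.
by transitivity ((c * c * sq x) * bil S x x); [rewrite c2 mul1r | ring].
Qed.

Definition rayleigh S := [set bil S x x | x in [set x | sq x = 1]].

Lemma rayleigh_lbound S : has_lbound (rayleigh S).
Proof.
exists (- (1 + frob S)) => _ [x /= x1 <-].
have := dot_CauchySchwarz x (S *m x); have := sq_mulmx_le S x.
rewrite -(bil_dot S x x) x1 mulr1 mul1r => le_frob le_sq.
have := frob_ge0 S; nra.
Qed.

Lemma inf_rayleigh_le S x : inf (rayleigh S) * sq x <= bil S x x.
Proof.
have [->|x0] := eqVneq x 0; first by rewrite !bil0l mulr0.
have [y y1 xy] := bil_unit_rescale _ x0; rewrite (xy S) mulrC ler_pM2l ?sq_gt0 //.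
by apply: ge_inf; [exact: rayleigh_lbound | exists y].
Qed.

End BilinearForm.

Section Spectrum.
Context {R : realType} {n : nat}.
Implicit Types (S : 'M[R]_n.+1) (x : 'cV[R]_n.+1).

Local Notation sq x := (bil 1%:M x x).

Lemma inf_rayleigh_eigenvalue S : S^T = S -> eigenvalue S (inf (rayleigh S)).
Proof.
(* [S - m%:M] is positive semidefinite with arbitrarily small Rayleigh values *)
move=> symS; set m := inf _; apply: eigenvalue_det0.
pose e0 : 'cV[R]_n.+1 := delta_mx 0 0.
have ray0 : rayleigh S (bil S e0 e0).
  by exists e0 => //=; rewrite bil_delta mul1mx mxE !eqxx.
apply: psd_singular => [|x|e e_gt0].
- by rewrite linearB /= tr_scalar_mx symS.
- by rewrite bil_subscalar subr_ge0 inf_rayleigh_le.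
have [_ [x /= x1 <-] xe] : exists2 r, rayleigh S r & r < m + e.
  by apply: inf_adherent => //; split; [exists (bil S e0 e0) | exact: rayleigh_lbound].
by exists x => //; rewrite bil_subscalar x1 mulr1 ltrBlDl.
Qed.

Lemma lambda_minE S : S^T = S -> lambda_min S = inf (rayleigh S).
Proof.
move=> symS; set m := inf (rayleigh S).
have eig_m : eigenvalue S m := inf_rayleigh_eigenvalue S symS.
have lb_m : lbound [set a | eigenvalue S a] m.
  move=> mu eig_mu; have [x x0 xmu] := eigenvalue_rayleigh S mu symS eig_mu.
  by have := inf_rayleigh_le S x; rewrite xmu ler_pM2r //; exact: sq_gt0.
apply/eqP; rewrite eq_le; apply/andP; split; first exact: (ge_inf (ex_intro _ m lb_m)).
by apply: lb_le_inf => //; exists m.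
Qed.

Lemma lambda_min_le S x : S^T = S -> lambda_min S * sq x <= bil S x x.
Proof. by move=> symS; rewrite lambda_minE // inf_rayleigh_le. Qed.

Lemma lambda_maxE S : lambda_max S = - lambda_min (- S).
Proof.
rewrite /lambda_min /inf opprK /lambda_max; congr sup.
apply/seteqP; split => [a eig_a|_ [b eig_b <-]] /=.
  by exists (- a); rewrite ?opprK //= eigenvalueN.
by rewrite -eigenvalueN opprK.
Qed.

Lemma le_lambda_max S x : S^T = S -> bil S x x <= lambda_max S * sq x.
Proof.
move=> symS; rewrite lambda_maxE mulNr lerNr -bilNm lambda_min_le //.
by rewrite linearN /= symS.
Qed.

Lemma lambda_min_gt0 S : sym_posdef S -> 0 < lambda_min S.
Proof.
move=> [symS posS]; rewrite lambda_minE //.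
have [x x0 xm] := eigenvalue_rayleigh _ _ symS (inf_rayleigh_eigenvalue _ symS).
by have := posS x x0; rewrite bilE xm pmulr_lgt0 //; exact: sq_gt0.
Qed.

Lemma lambda_max_gt0 S : sym_posdef S -> 0 < lambda_max S.
Proof.
move=> [symS posS]; pose e0 : 'cV[R]_n.+1 := delta_mx 0 0.
have e1 : sq e0 = 1 by rewrite bil_delta mul1mx mxE !eqxx.
have e0_neq0 : e0 != 0.
  by apply/eqP => e00; move: e1; rewrite e00 bil0l => /eqP; rewrite eq_sym oner_eq0.
have := le_lambda_max S e0 symS; rewrite e1 mulr1; apply: lt_le_trans.
by rewrite -bilE posS.
Qed.

End Spectrum.

Lemma sup_ge0 {R : realType} (E : set R) : (forall x, E x -> 0 <= x) -> 0 <= sup E.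
Proof.
move=> E_ge0; have [supE|/sup_out ->] := pselect (has_sup E); last exact: lexx.
have [x Ex] := supE.1; apply: le_trans (E_ge0 x Ex) _; exact: sup_upper_bound.
Qed.

Section Norms.
Context {R : realType} {n : nat}.
Implicit Types (B Q : 'M[R]_n) (u v x y : 'cV[R]_n).

Local Notation sq x := (bil 1%:M x x).

Lemma vnormE x : vnorm x = Num.sqrt (sq x).
Proof.
by rewrite /vnorm bil1; congr Num.sqrt; apply: eq_bigr => i _; rewrite expr2.
Qed.

Lemma vnorm_ge0 x : 0 <= vnorm x.
Proof. by rewrite vnormE sqrtr_ge0. Qed.

Lemma vnormZ c x : vnorm (c *: x) = `|c| * vnorm x.
Proof. by rewrite !vnormE bilZl bilZr mulrA -expr2 sqrtrM ?sqr_ge0 // sqrtr_sqr. Qed.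

Lemma vnorm_mulmx_frob B x : vnorm (B *m x) <= Num.sqrt (frob B) * vnorm x.
Proof.
rewrite !vnormE -sqrtrM ?frob_ge0 // ler_sqrt ?sq_mulmx_le //.
by rewrite mulr_ge0 ?frob_ge0 ?sq_ge0.
Qed.

Lemma mnorm_ge0 B : 0 <= mnorm B.
Proof. by apply: sup_ge0 => _ [y _ <-]; exact: vnorm_ge0. Qed.

Lemma vnorm_mulmx_le B x : vnorm (B *m x) <= mnorm B * vnorm x.
Proof.
have [->|x0] := eqVneq x 0; first by rewrite mulmx0 !vnormE !bil0l sqrtr0 mulr0.
have x_gt0 : 0 < vnorm x by rewrite vnormE sqrtr_gt0 sq_gt0.
pose y := (vnorm x)^-1 *: x.
have y1 : vnorm y = 1 by rewrite vnormZ gtr0_norm ?invr_gt0 // mulVf ?gt_eqF.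
have le_mnorm : vnorm (B *m y) <= mnorm B.
  apply: sup_upper_bound; last by exists y.
  split; first by exists (vnorm (B *m y)), y.
  exists (Num.sqrt (frob B)) => _ [z z1 <-].
  by have := vnorm_mulmx_frob B z; rewrite z1 mulr1.
have -> : B *m x = vnorm x *: (B *m y).
  by rewrite -scalemxAr scalerA divff ?gt_eqF // scale1r.
by rewrite vnormZ gtr0_norm // mulrC; apply: ler_wpM2r => //; exact: ltW.
Qed.

Lemma entry_le_mnorm B i j : `|B i j| <= mnorm B.
Proof.
pose ej : 'cV[R]_n := delta_mx j 0.
have ej1 : vnorm ej = 1 by rewrite vnormE bil_delta mul1mx mxE !eqxx sqrtr1.
have -> : B i j = (B *m ej) i 0 by rewrite /ej -colE mxE.
apply: le_trans (_ : _ <= vnorm (B *m ej)) _.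
  rewrite vnormE -sqrtr_sqr ler_sqrt ?sq_ge0 // bil1 (bigD1 i) //= -expr2.
  by rewrite lerDl sumr_ge0 // => k _; rewrite -expr2 sqr_ge0.
by apply: le_trans (vnorm_mulmx_le B ej) _; rewrite ej1 mulr1.
Qed.

Lemma posdef_bil_ge0 Q x : sym_posdef Q -> 0 <= bil Q x x.
Proof.
move=> [_ posQ]; have [->|x0] := eqVneq x 0; first by rewrite bil0l.
by rewrite -bilE ltW // posQ.
Qed.

Lemma qvnormE Q x : qvnorm Q x = Num.sqrt (bil Q x x).
Proof. by rewrite /qvnorm bilE. Qed.

Lemma qvnorm_ge0 Q x : 0 <= qvnorm Q x.
Proof. by rewrite qvnormE sqrtr_ge0. Qed.

Lemma qvnorm_sqr Q x : sym_posdef Q -> qvnorm Q x ^+ 2 = bil Q x x.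
Proof. by move=> posQ; rewrite qvnormE sqr_sqrtr // posdef_bil_ge0. Qed.

Lemma qvnorm0 Q : qvnorm Q 0 = 0.
Proof. by rewrite qvnormE bil0l sqrtr0. Qed.

Lemma qvnormZ Q c x : qvnorm Q (c *: x) = `|c| * qvnorm Q x.
Proof. by rewrite !qvnormE bilZl bilZr mulrA -expr2 sqrtrM ?sqr_ge0 // sqrtr_sqr. Qed.

Lemma qvnormN Q x : qvnorm Q (- x) = qvnorm Q x.
Proof. by rewrite -scaleN1r qvnormZ normrN normr1 mul1r. Qed.

Lemma bil_le_qvnorm Q u v : sym_posdef Q -> bil Q u v <= qvnorm Q u * qvnorm Q v.
Proof.
move=> posQ; have [symQ _] := posQ.
rewrite !qvnormE -sqrtrM ?posdef_bil_ge0 //.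
apply: le_trans (ler_norm _) _.
rewrite -sqrtr_sqr ler_sqrt ?mulr_ge0 ?posdef_bil_ge0 //.
by apply: bil_CauchySchwarz => // x; exact: posdef_bil_ge0.
Qed.

Lemma qvnormD Q u v : sym_posdef Q -> qvnorm Q (u + v) <= qvnorm Q u + qvnorm Q v.
Proof.
move=> posQ; have [symQ _] := posQ.
rewrite -ler_sqr ?nnegrE ?addr_ge0 ?qvnorm_ge0 // !qvnorm_sqr //.
rewrite bilDl !bilDr (bilC _ v u) // -!qvnorm_sqr //.
have := bil_le_qvnorm Q u v posQ; lra.
Qed.

Lemma qmnorm_le Q B c : 0 <= c ->
  (forall y, qvnorm Q (B *m y) <= c * qvnorm Q y) -> qmnorm Q B <= c.
Proof.
move=> c_ge0 leB; have [[r Er]|E0] := pselect ([set qvnorm Q (B *m y) | y in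
    [set y | qvnorm Q y = 1]] !=set0); last first.
  rewrite /qmnorm (_ : [set _ | _ in _] = set0) ?sup0 //.
  by apply/eqP/negPn/negP => /set0P /E0.
by apply: ge_sup; [exists r | move=> _ [y y1 <-]; have := leB y; rewrite y1 mulr1].
Qed.

End Norms.

Lemma qvnorm_mulmx_le {R : realType} {n : nat} (Q B : 'M[R]_n.+1) x :
  sym_posdef Q -> qvnorm Q (B *m x) <= Num.sqrt (kappa_Q Q) * mnorm B * qvnorm Q x.
Proof.
move=> posQ; have [symQ _] := posQ.
have lmin_gt0 := lambda_min_gt0 Q posQ; have lmin_ge0 := ltW lmin_gt0.
have lmax_ge0 := ltW (lambda_max_gt0 Q posQ).
have upper : qvnorm Q (B *m x) <= Num.sqrt (lambda_max Q) * vnorm (B *m x).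
  rewrite qvnormE vnormE -sqrtrM // ler_sqrt ?mulr_ge0 ?sq_ge0 //.
  exact: le_lambda_max.
have lower : Num.sqrt (lambda_min Q) * vnorm x <= qvnorm Q x.
  rewrite qvnormE vnormE -sqrtrM // ler_sqrt ?posdef_bil_ge0 //.
  exact: lambda_min_le.
apply: (le_trans upper); rewrite /kappa_Q sqrtrM // sqrtrV //.
rewrite -!mulrA; apply: ler_wpM2l; first exact: sqrtr_ge0.
apply: le_trans (vnorm_mulmx_le B x) _; rewrite mulrCA.
by apply: ler_wpM2l; [exact: mnorm_ge0 | rewrite ler_pdivlMl ?sqrtr_gt0].
Qed.

Lemma pow1D_sub1_le {R : realType} (x : R) (k : nat) : 0 <= x -> k%:R * x <= 1 ->
  (1 + x) ^+ k - 1 <= k%:R * x + (k%:R * x) ^+ 2.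
Proof.
move=> x_ge0; elim: k => [|k IHk] kx1; first by rewrite expr0 subrr mul0r expr0n addr0.
have k_ge0 : (0 : R) <= k%:R by rewrite ler0n.
rewrite -natr1 in kx1 *; rewrite exprSr.
have kx1' : k%:R * x <= 1 by nra.
have := IHk kx1'; set p := (1 + x) ^+ k; set K : R := k%:R => IH.
have e1 : (p - 1) * (1 + x) <= (K * x + (K * x) ^+ 2) * (1 + x).
  by apply: ler_wpM2r; lra.
have e2 : (K * x) * (K * x ^+ 2) <= K * x ^+ 2.
  by rewrite -[leRHS]mul1r; apply: ler_wpM2r; [rewrite mulr_ge0 ?sqr_ge0 | nra].
nra.
Qed.

Lemma qvnorm_prod_sub_le {R : realType} {n : nat} (Q : 'M[R]_n) (alpha b : R)
    (B : nat -> 'M[R]_n) (k : nat) : sym_posdef Q -> 0 <= alpha -> 0 <= b ->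
  (forall i y, qvnorm Q (B i *m y) <= b * qvnorm Q y) ->
  forall y, qvnorm Q ((\prod_(i < k) (1%:M - alpha *: B i)) *m y - y)
    <= ((1 + alpha * b) ^+ k - 1) * qvnorm Q y.
Proof.
move=> posQ alpha_ge0 b_ge0 leB; elim: k => [|k IHk] y.
  by rewrite big_ord0 mul1mx subrr qvnorm0 expr0 subrr mul0r.
rewrite big_ord_recr /= -mulmxE -mulmxA.
set z := (1%:M - alpha *: B k) *m y.
have y_ge0 := qvnorm_ge0 Q y.
have zy : qvnorm Q (z - y) <= alpha * b * qvnorm Q y.
  rewrite /z mulmxBl mul1mx -scalemxAl addrAC subrr add0r qvnormN qvnormZ.
  by rewrite ger0_norm // -mulrA ler_wpM2l.
have z_le : qvnorm Q z <= (1 + alpha * b) * qvnorm Q y.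
  rewrite -[z](subrK y) addrC; apply: le_trans (qvnormD _ _ _ posQ) _; lra.
have c_ge0 : 0 <= (1 + alpha * b) ^+ k - 1.
  by rewrite subr_ge0 exprn_ege1 // lerDl mulr_ge0.
rewrite -(subrK z (_ *m z)) -addrA; apply: le_trans (qvnormD _ _ _ posQ) _.
have := ler_wpM2l c_ge0 z_le; have := IHk z; rewrite exprSr.
set c := (1 + alpha * b) ^+ k; nra.
Qed.

Section Integration.
Context {R : realType} {d : measure_display} {T : measurableType d}.

Lemma integrable_Rsum (mu : {measure set T -> \bar R}) (D : set T) (I : Type)
    (s : seq I) (f : I -> T -> R) : measurable D ->
  (forall i, mu.-integrable D (EFin \o f i)) ->
  mu.-integrable D (EFin \o (fun x => \sum_(i <- s) f i x)).
Proof.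
move=> mD intf; have -> : EFin \o (fun x => \sum_(i <- s) f i x) =
    (fun x => \sum_(i <- s) (EFin \o f i) x)%E.
  by apply/funext => x; rewrite /= sumEFin.
by apply: integrable_sum.
Qed.

Lemma Rintegral_sum (mu : {measure set T -> \bar R}) (D : set T) (I : Type)
    (s : seq I) (f : I -> T -> R) : measurable D ->
  (forall i, mu.-integrable D (EFin \o f i)) ->
  \int[mu]_(x in D) (\sum_(i <- s) f i x) = \sum_(i <- s) \int[mu]_(x in D) f i x.
Proof.
move=> mD intf; elim: s => [|i s IHs].
  by under eq_Rintegral do rewrite big_nil; rewrite big_nil Rintegral_cst // mul0r.
under eq_Rintegral do rewrite big_cons.
by rewrite big_cons RintegralD ?IHs //; exact: integrable_Rsum.
Qed.

Lemma integrable_Rmulr (mu : {measure set T -> \bar R}) (D : set T) (f : T -> R)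
    (r : R) : measurable D -> mu.-integrable D (EFin \o f) ->
  mu.-integrable D (EFin \o (fun x => f x * r)).
Proof.
move=> mD intf; have -> : EFin \o (fun x => f x * r) = ((EFin \o f) \* cst r%:E)%E.
  by apply/funext.
exact: integrableZr.
Qed.

Lemma integrable_mx_pairing (mu : {measure set T -> \bar R}) {m p : nat}
    (Y : T -> 'M[R]_(m, p)) (c : 'I_m -> 'I_p -> R) :
  (forall i k, mu.-integrable setT (EFin \o (fun w => Y w i k))) ->
  mu.-integrable setT (EFin \o (fun w => \sum_i \sum_k Y w i k * c i k)).
Proof.
move=> intY; apply: integrable_Rsum => // i; apply: integrable_Rsum => // k.
exact: integrable_Rmulr.
Qed.

Lemma Rintegral_mx_pairing (mu : {measure set T -> \bar R}) {m p : nat}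
    (Y : T -> 'M[R]_(m, p)) (c : 'I_m -> 'I_p -> R) :
  (forall i k, mu.-integrable setT (EFin \o (fun w => Y w i k))) ->
  \int[mu]_w (\sum_i \sum_k Y w i k * c i k) =
  \sum_i \sum_k mx_expect mu Y i k * c i k.
Proof.
move=> intY; rewrite Rintegral_sum //; last first.
  by move=> i; apply: integrable_Rsum => // k; exact: integrable_Rmulr.
apply: eq_bigr => i _.
rewrite Rintegral_sum //; last by move=> k; exact: integrable_Rmulr.
by apply: eq_bigr => k _; rewrite RintegralZr // mxE.
Qed.

Lemma bounded_integrable (P : probability T R) (f : T -> R) (C : R) :
  measurable_fun setT f -> (forall w, `|f w| <= C) -> P.-integrable setT (EFin \o f).
Proof.
move=> mf f_le; apply: measurable_bounded_integrable => //.
  by apply: le_lt_trans (probability_le1 P measurableT) _; exact: ltry.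
rewrite /bounded_near; near=> M => x _.
by apply: le_trans (f_le x) _; near: M; apply: nbhs_pinfty_ge; exact: num_real.
Unshelve. all: end_near.
Qed.

Lemma qvnorm_expect_sub_le {n : nat} (P : probability T R) (Q : 'M[R]_n)
    (Y : T -> 'M[R]_n) (y v : 'cV[R]_n) (c : R) : sym_posdef Q -> 0 <= c ->
  (forall i j, P.-integrable setT (EFin \o (fun w => Y w i j))) ->
  (forall w, qvnorm Q (Y w *m y - v) <= c) ->
  qvnorm Q (mx_expect P Y *m y - v) <= c.
Proof.
(* [qvnorm Q u ^+ 2 = bil Q u u] is the mean of [bil Q (Y w *m y - v) u], and
   each of these is at most [c * qvnorm Q u] *)
move=> posQ c_ge0 intY leY.
set u := mx_expect P Y *m y - v.
have u_ge0 := qvnorm_ge0 Q u.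
have pairing M : bil Q (M *m y) u = \sum_i \sum_k M i k * (y k 0 * (Q *m u) i 0).
  rewrite bil_mulmxr; apply: eq_bigr => i _; rewrite mxE mulr_suml.
  by apply: eq_bigr => k _; ring.
have pairingE : (fun w => bil Q (Y w *m y) u) =
    (fun w => \sum_i \sum_k Y w i k * (y k 0 * (Q *m u) i 0)).
  by apply/funext => w; rewrite pairing.
have expect_pairing : \int[P]_w bil Q (Y w *m y) u = bil Q (mx_expect P Y *m y) u.
  by rewrite pairingE Rintegral_mx_pairing // pairing.
have pointwise w : bil Q (Y w *m y) u <= c * qvnorm Q u + bil Q v u.
  have := bil_le_qvnorm Q (Y w *m y - v) u posQ; rewrite bilBl.
  have := ler_wpM2r u_ge0 (leY w); lra.
have : bil Q (mx_expect P Y *m y) u <= c * qvnorm Q u + bil Q v u.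
  rewrite -expect_pairing.
  apply: le_trans (_ : _ <= \int[P]_w (c * qvnorm Q u + bil Q v u)) _.
    apply: le_Rintegral => //; last exact: finite_measure_integrable_cst.
    by rewrite pairingE; exact: integrable_mx_pairing.
  by rewrite Rintegral_cst // (congr1 fine (probability_setT P)) mulr1.
rewrite -[bil Q (_ *m y) u](subrK (bil Q v u)) -bilBl -/u -qvnorm_sqr //; nra.
Qed.

Lemma qmnorm_sub_expect_le {n : nat} (P : probability T R) (Q : 'M[R]_n)
    (Y : T -> 'M[R]_n) (r : R) : sym_posdef Q -> 0 <= r ->
  (forall i j, P.-integrable setT (EFin \o (fun w => Y w i j))) ->
  (forall w y, qvnorm Q (Y w *m y - y) <= r * qvnorm Q y) ->
  forall w, qmnorm Q (Y w - mx_expect P Y) <= r *+ 2.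
Proof.
move=> posQ r_ge0 intY leY w; apply: qmnorm_le => [|y]; first by rewrite mulrn_wge0.
have leE : qvnorm Q (mx_expect P Y *m y - y) <= r * qvnorm Q y.
  by apply: qvnorm_expect_sub_le => //; rewrite mulr_ge0 ?qvnorm_ge0.
have -> : (Y w - mx_expect P Y) *m y = (Y w *m y - y) - (mx_expect P Y *m y - y).
  by rewrite mulmxBl opprB addrA subrK.
apply: le_trans (qvnormD _ _ _ posQ) _; rewrite qvnormN mulr2n mulrDl.
exact: lerD.
Qed.

End Integration.

Section ProductEntries.
Context {R : realType} {d : measure_display} {T : measurableType d} {n : nat}.
Implicit Types F : nat -> T -> 'M[R]_n.

Lemma measurable_prod_entry F k :
  (forall m i j, measurable_fun setT (fun w => F m w i j)) ->
  forall i j, measurable_fun setT (fun w => (\prod_(m < k) F m w) i j).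
Proof.
move=> mF; elim: k => [|k IHk] i j.
  by under eq_fun do rewrite big_ord0; exact: measurable_cst.
under eq_fun do rewrite big_ord_recr /= -mulmxE mxE.
by apply: measurable_sum => l; exact: measurable_realfun.measurable_funM.
Qed.

Lemma bounded_prod_entry F (K : R) k : (forall m w i j, `|F m w i j| <= K) ->
  exists C, forall w i j, `|(\prod_(m < k) F m w) i j| <= C.
Proof.
move=> leK; elim: k => [|k [C leC]].
  by exists 1 => w i j; rewrite big_ord0 mxE; case: (i == j); rewrite ?normr1 ?normr0.
exists ((C * K) *+ n) => w i j; rewrite big_ord_recr /= -mulmxE mxE.
apply: le_trans (ler_norm_sum _ _ _) _.
rewrite (_ : (C * K) *+ n = \sum_(l < n) (C * K)); last by rewrite sumr_const card_ord.
by apply: ler_sum => l _; rewrite normrM ler_pM.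
Qed.

End ProductEntries.

Lemma measurable_step_entry {R : realType} {dZ dT : measure_display}
    {Z : measurableType dZ} {T : measurableType dT} {n : nat}
    (A : Z -> 'M[R]_n) (X : T -> Z) (alpha : R) :
  (forall i j, measurable_fun setT (fun z => A z i j)) -> measurable_fun setT X ->
  forall i j, measurable_fun setT (fun w => (1%:M - alpha *: A (X w)) i j).
Proof.
move=> mA mX i j; under eq_fun do rewrite !mxE.
apply: measurable_realfun.measurable_funB; first exact: measurable_cst.
apply: measurable_realfun.measurable_funM; first exact: measurable_cst.
exact: measurableT_comp (mA i j) mX.
Qed.

Lemma step_entry_le {R : realType} {n : nat} (B : 'M[R]_n) (alpha : R) i j :
  `|(1%:M - alpha *: B) i j| <= 1 + `|alpha| * mnorm B.
Proof.
rewrite !mxE; apply: le_trans (ler_normB _ _) _; apply: lerD.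
  by case: (i == j); rewrite ?normr1 ?normr0.
by rewrite normrM ler_wpM2l ?entry_le_mnorm.
Qed.

Lemma integrable_step_prod_entry {R : realType} {dZ dT : measure_display}
    {Z : measurableType dZ} {T : measurableType dT} {n : nat} (P : probability T R)
    (A : Z -> 'M[R]_n) (X : nat -> T -> Z) (alpha C : R) (k : nat) :
  (forall i j, measurable_fun setT (fun z => A z i j)) ->
  (forall m, measurable_fun setT (X m)) -> (forall z, mnorm (A z) <= C) ->
  forall i j, P.-integrable setT
    (EFin \o (fun w => (\prod_(m < k) (1%:M - alpha *: A (X m w))) i j)).
Proof.
move=> mA mX leC i j.
have step_le m w i' j' : `|(1%:M - alpha *: A (X m w)) i' j'| <= 1 + `|alpha| * C.
  apply: le_trans (step_entry_le _ _ i' j') _.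
  by rewrite lerD2l; apply: ler_wpM2l; [exact: normr_ge0 | exact: leC].
have [K leK] := bounded_prod_entry _ _ k step_le.
apply: (bounded_integrable _ _ K); last by move=> w; exact: leK.
apply: (measurable_prod_entry (fun m w => 1%:M - alpha *: A (X m w))) => m.
exact: measurable_step_entry.
Qed.

Lemma block_len_le {R : realType} (c : R) (t : nat) : 0 <= c -> (0 < t)%N ->
  Num.ceil c != 0 ->
  ((maxn 1 `|Num.ceil (c * t%:R)|)%:R : R) <= t%:R * (Num.ceil c)%:~R.
Proof.
move=> c_ge0 t_gt0 k_neq0.
have ct_ge0 : 0 <= c * t%:R by rewrite mulr_ge0.
have k_ge0 : 0 <= Num.ceil c by rewrite ceil_ge0; lra.
have j_ge0 : 0 <= Num.ceil (c * t%:R) by rewrite ceil_ge0; lra.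
have j_le : Num.ceil (c * t%:R) <= t%:Z * Num.ceil c.
  by rewrite ceil_le_int intrM mulrC; apply: ler_wpM2l; [exact: ler0n | exact: ceil_ge].
have : (maxn 1 `|Num.ceil (c * t%:R)| <= t * `|Num.ceil c|)%N by lia.
by rewrite -(ler_nat R) natrM natr_absz ger0_norm.
Qed.

Lemma mul_block_len_le {R : realType} (c m alpha : R) (t : nat) :
  0 <= c -> (0 < t)%N -> 0 < alpha -> alpha <= m / (Num.ceil c)%:~R / t%:R ->
  alpha * (maxn 1 `|Num.ceil (c * t%:R)|)%:R <= m.
Proof.
move=> c_ge0 t_gt0 alpha_gt0 le_alpha.
(* a zero ceiling would make the bound on [alpha] read [m / 0 / t = 0] *)
have k_neq0 : Num.ceil c != 0.
  by apply: contraTneq le_alpha => ->; rewrite mulr0z invr0 mulr0 mul0r -ltNge.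
have k_gt0 : (0 : R) < (Num.ceil c)%:~R by rewrite ltr0z lt_def k_neq0 ceil_ge0; lra.
apply: le_trans (ler_wpM2l (ltW alpha_gt0) (block_len_le _ _ c_ge0 t_gt0 k_neq0)) _.
by move: le_alpha; rewrite !ler_pdivlMr ?ltr0n // mulrA.
Qed.

Lemma pow1D_sub1_linear_le {R : realType} (alpha b a : R) (h : nat) :
  0 <= alpha -> 0 <= b -> alpha * h%:R * b <= 1 -> alpha * h%:R * b ^+ 2 <= a / 6 ->
  2 * ((1 + alpha * b) ^+ h - 1) <= 2 * (b + a / 6) * alpha * h%:R.
Proof.
move=> alpha_ge0 b_ge0 le1 le_a.
have ahb : h%:R * (alpha * b) = alpha * h%:R * b by ring.
have := @pow1D_sub1_le _ _ h (mulr_ge0 alpha_ge0 b_ge0); rewrite ahb => /(_ le1).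
have : (alpha * h%:R * b) ^+ 2 <= alpha * h%:R * (a / 6).
  have -> : (alpha * h%:R * b) ^+ 2 = alpha * h%:R * (alpha * h%:R * b ^+ 2) by ring.
  by rewrite ler_wpM2l ?mulr_ge0.
lra.
Qed.

Section Constants.
Context {R : realType} {dT : measure_display} {T : measurableType dT} {n : nat}.
Variables (pi : probability T R) (A : T -> 'M[R]_n.+1) (Q : 'M[R]_n.+1).

Lemma mnorm_le_C_A z : CA_bounded pi A -> mnorm (A z) <= C_A pi A.
Proof.
move=> [ubA _]; rewrite /C_A le_max; apply/orP; left.
by apply: sup_upper_bound; [split; [exists (mnorm (A z)), z | ] | exists z].
Qed.

Lemma C_A_ge0 : 0 <= C_A pi A.
Proof.
rewrite /C_A le_max; apply/orP; left.
by apply: sup_ge0 => _ [z _ <-]; exact: mnorm_ge0.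
Qed.

Lemma a_Q_ge0 : 0 <= a_Q Q.
Proof. by rewrite /a_Q divr_ge0 // mulr_ge0 // mnorm_ge0. Qed.

Lemma kappa_Q_ge0 : sym_posdef Q -> 0 <= kappa_Q Q.
Proof.
by move=> posQ; rewrite /kappa_Q divr_ge0 // ltW // ?lambda_max_gt0 ?lambda_min_gt0.
Qed.

Lemma step_block_bounds (tmix : nat) (alpha : R) : sym_posdef Q -> (0 < tmix)%N ->
  0 < alpha <= alphaM_inf pi A Q / tmix%:R ->
  let b := Num.sqrt (kappa_Q Q) * C_A pi A in
  let s := alpha * (block_len pi A Q tmix)%:R in
  s * b <= 1 /\ s * b ^+ 2 <= a_Q Q / 6.
Proof.
move=> posQ t_gt0 /andP[alpha_gt0 le_alpha] b s.
have k_ge0 := kappa_Q_ge0 posQ; have a_ge0 := a_Q_ge0.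
have b_ge0 : 0 <= b by rewrite mulr_ge0 ?sqrtr_ge0 ?C_A_ge0.
have b2 : b ^+ 2 = kappa_Q Q * C_A pi A ^+ 2 by rewrite exprMn sqr_sqrtr.
have s_le : s <= Num.min (Num.min (alpha_inf pi A Q)
    ((Num.sqrt (kappa_Q Q))^-1 * (C_A pi A)^-1))
    (a_Q Q / (6 * expR 1 * kappa_Q Q * C_A pi A ^+ 2)).
  rewrite /s; have -> : block_len pi A Q tmix = maxn 1
      `|Num.ceil (8 * Num.sqrt (kappa_Q Q) * C_A pi A / a_Q Q * tmix%:R)|%N.
    by rewrite /block_len mulrAC.
  by apply: mul_block_len_le => //; rewrite !mulr_ge0 ?sqrtr_ge0 ?C_A_ge0 ?invr_ge0.
have s_le1 : s <= b^-1.
  apply: le_trans s_le _; rewrite ge_min; apply/orP; left.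
  by rewrite ge_min /b (invfM (Num.sqrt _)) lexx orbT.
have s_le2 : s <= a_Q Q / (6 * expR 1 * b ^+ 2).
  apply: le_trans s_le _; rewrite ge_min; apply/orP; right.
  by rewrite b2 mulrA lexx.
split.
  have [->|b_neq0] := eqVneq b 0; first by rewrite mulr0 ler01.
  by rewrite -ler_pdivlMr ?div1r // lt_def b_neq0.
have [->|b_neq0] := eqVneq b 0; first by rewrite expr0n mulr0 divr_ge0.
have b2_gt0 : 0 < b ^+ 2 by rewrite exprn_gt0 // lt_def b_neq0.
apply: le_trans (ler_wpM2r (ltW b2_gt0) s_le2) _.
have -> : a_Q Q / (6 * expR 1 * b ^+ 2) * b ^+ 2 = a_Q Q / 6 * (expR 1)^-1.
  by field; rewrite b_neq0 gt_eqF ?expR_gt0.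
apply: ler_piMr; first by rewrite divr_ge0.
by rewrite invf_le1 ?expR_gt0 //; have := @expR_ge1Dx R 1; lra.
Qed.

End Constants.

Theorem lemma8
  (R : realType)
  (dZ : measure_display) (Z : measurableType dZ) (distZ : Z -> Z -> R)
  (HZ : polish_borel distZ)
  (P : R.-pker Z ~> Z) (pi : probability Z R) (Hinv : kinvariant P pi)
  (tmix : nat) (Htmix : (0 < tmix)%N)
  (Hmix : forall k : nat, (0 < k)%N ->
     dobrushin P k <= (4^-1 : R) ^+ (k %/ tmix))
  (n : nat) (A : Z -> 'M[R]_n.+1)
  (HAmeas : forall i j, measurable_fun setT (fun z => A z i j))
  (Hhur : neg_hurwitz (Abar pi A))
  (HCA : CA_bounded pi A)
  (Q : 'M[R]_n.+1) (HQ : sym_posdef Q)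
  (HLyap : (Abar pi A)^T *m Q + Q *m Abar pi A = 1%:M)
  (alpha : R)
  (Halpha : 0 < alpha <= alphaM_inf pi A Q / tmix%:R)
  (xi : probability Z R)
  (dO : measure_display) (Omega : measurableType dO)
  (Pr : probability Omega R) (Zs : nat -> Omega -> Z)
  (Hchain : is_markov_chain P Pr Zs xi) :
  let h := block_len pi A Q tmix in
  let Y1 := fun w : Omega =>
    \prod_(i < h) (1%:M - alpha *: A (Zs (h - i)%N w)) in
  {ae Pr, forall w : Omega,
     qmnorm Q (Y1 w - mx_expect Pr Y1) <= C_sigma pi A Q * alpha * h%:R}.
Proof.
move=> h Y1; have alpha_ge0 : 0 <= alpha by case/andP: Halpha => /ltW.
set b := Num.sqrt (kappa_Q Q) * C_A pi A.
have b_ge0 : 0 <= b by rewrite mulr_ge0 ?sqrtr_ge0 ?C_A_ge0.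
have leA z y : qvnorm Q (A z *m y) <= b * qvnorm Q y.
  apply: le_trans (qvnorm_mulmx_le _ _ _ HQ) _; rewrite ler_wpM2r ?qvnorm_ge0 //.
  by rewrite ler_wpM2l ?sqrtr_ge0 ?mnorm_le_C_A.
have [sb_le1 sb2_le] := step_block_bounds pi A Q tmix alpha HQ Htmix Halpha.
set r := (1 + alpha * b) ^+ h - 1.
have r_ge0 : 0 <= r by rewrite subr_ge0 exprn_ege1 // lerDl mulr_ge0.
have leY w y : qvnorm Q (Y1 w *m y - y) <= r * qvnorm Q y.
  by apply: (qvnorm_prod_sub_le Q alpha b (fun i => A (Zs (h - i)%N w))) => // i.
have intY : forall i j, Pr.-integrable setT (EFin \o (fun w => Y1 w i j)).
  apply: (integrable_step_prod_entry _ _ (fun m => Zs (h - m)%N)) => // [m|z].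
    exact: Hchain.1.
  exact: mnorm_le_C_A HCA.
apply: aeW => w; apply: le_trans (qmnorm_sub_expect_le _ _ _ _ HQ r_ge0 intY leY w) _.
by rewrite -[r *+ 2]mulr_natl; apply: pow1D_sub1_linear_le => //; rewrite -mulrA.
Qed.
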